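(* Let $\mathbb A\in\mathcal K$ and $\theta$ a congruence of $\mathbb A$. (1) If $\bar a\in\mathbb A/\theta$ is maximal (respectively as-maximal, u-maximal) in $\mathbb A/\theta$, then there is $a\in\bar a$ that is maximal (respectively as-maximal, u-maximal) in $\mathbb A$. (2) If $a$ is maximal (respectively as-maximal, u-maximal) in $\mathbb A$, then $a/\theta$ is maximal (respectively as-maximal, u-maximal) in $\mathbb A/\theta$.
   Context: All algebras are finite and idempotent; $\mathrm{Sg}(B)$ denotes the subalgebra generated by a set $B$. Edges: for elements $a,b$ of an algebra $\mathbb A$ let $\mathbb B=\mathrm{Sg}(a,b)$. The pair $ab$ is an edge if there is a maximal congruence $\theta$ of $\mathbb B$ such that either $\mathbb B/\theta$ is a set (unary type), or $\mathbb B/\theta$ is term equivalent to the full idempotent reduct of a module and some term operation $f$ induces on $\mathbb B/\theta$ the affine operation $x-y+z$ (affine type), or some term operation $f$ with $f/\theta$ a semilattice operation on $\{a/\theta,b/\theta\}$, or one with $f/\theta$ a majority operation on $\{a/\theta,b/\theta\}$. Semilattice type: the semilattice option holds for some $\theta$; majority type: not semilattice type and the majority option holds for some $\theta$; $\{a/\theta,b/\theta\}$ is a thick edge. $\mathbb A$ is smooth if for every edge $ab$ of semilattice or majority type with witness $\theta$, $a/\theta\cup b/\theta$ is a subalgebra. Standing assumption: $\mathcal K$ is a fixed finite class of similar smooth idempotent algebras, closed under subalgebras and homomorphic images, with no edges of unary type; all notions below are taken with respect to $\mathcal K$. Fixed binary term $\cdot$: semilattice operation on every thick semilattice edge of every algebra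 in $\mathcal K$, and for all $a,b$ either $a\cdot b=a$ or $(a,a\cdot b)$ is a thin semilattice edge. A thin semilattice edge is a pair $ab$ with $a\cdot b=b\cdot a=b$. A ternary term $g'$ satisfies the majority condition if $g'(x,g'(x,y,y),g'(x,y,y))=g'(x,y,y)$ in $\mathcal K$ and $g'$ is a majority operation on every thick majority edge of every algebra in $\mathcal K$. A ternary term $h'$ satisfies the minority condition if $h'(h'(x,y,y),y,y)=h'(x,y,y)$ in $\mathcal K$ and $h'$ induces the affine operation on $\mathrm{Sg}(a,b)/\theta$ for every affine edge $ab$ with witness $\theta$; such an $h$ is fixed. A (directed) pair $ab$ is a thin majority edge if for every $g'$ satisfying the majority condition each of $\mathrm{Sg}(a,g'(a,b,b))$, $\mathrm{Sg}(a,g'(b,a,b))$, $\mathrm{Sg}(a,g'(b,b,a))$ contains $b$. A pair $ab$ is a thin affine edge if $h(b,a,a)=b$ and $b\in\mathrm{Sg}(a,h'(a,a,b))$ for every $h'$ satisfying the minority condition. A path is a sequence $a_0,\dots,a_k$ where each $a_{i-1}a_i$ is a thin edge; it is an s-path if all are thin semilattice edges, an as-path if all are thin semilattice or thin affine edges, an asm-path in general. $a\sqsubseteq b$, $a\sqsubseteq^{as}b$, $a\sqsubseteq^{asm}b$ mean there is an s-, as-, asm-path from $a$ to $b$ in the algebra considered. $a$ is maximal (as-maximal, u-maximal) if $a\sqsubseteq b$ implies $b\sqsubseteq a$ (resp. the same with $\sqsubseteq^{as}$, $\sqsubseteq^{asm}$). *)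

From HB Require Import structures.
From mathcomp Require Import all_boot all_algebra.
Set Implicit Arguments. Unset Strict Implicit. Unset Printing Implicit Defensive.
Import GRing.Theory.

Record signature := Signature { sym : finType; arity : sym -> nat }.

Record algebra (S : signature) := Algebra {
  carrier :> finType;
  op : forall f : sym S, {ffun 'I_(arity f) -> carrier} -> carrier }.
Arguments op {S} a f _ : rename.

Definition idempotent S (A : algebra S) :=
  forall (f : sym S) (x : A), op A f [ffun=> x] = x.

Definition alg_hom S (A B : algebra S) (h : A -> B) :=
  forall (f : sym S) (u : {ffun 'I_(arity f) -> A}),
    h (op A f u) = op B f [ffun i => h (u i)].

Definition iso S (A B : algebra S) := exists h : A -> B, alg_hom h /\ bijective h.

Inductive term (S : signature) : Type :=
| Var of nat
| App (f : sym S) of ('I_(arity f) -> term S).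
Arguments Var {S} _.

Fixpoint eval S (A : algebra S) (e : nat -> A) (t : term S) {struct t} : A :=
  match t with
  | Var i => e i
  | App f args => op A f [ffun j => @eval S A e (args j)]
  end.

Arguments eval {S} A e t.

Fixpoint vars_lt S (n : nat) (t : term S) {struct t} : Prop :=
  match t with
  | Var i => (i < n)%N
  | App f args => forall j, vars_lt n (args j)
  end.

Definition bin S (A : algebra S) (t : term S) (x y : A) : A :=
  eval A (fun i => if i is 0 then x else y) t.
Definition ter S (A : algebra S) (t : term S) (x y z : A) : A :=
  eval A (fun i => match i with 0 => x | 1 => y | _ => z end) t.

Arguments bin {S} A t x y.
Arguments ter {S} A t x y z.

Definition closed S (A : algebra S) (P : A -> Prop) :=
  forall (f : sym S) (u : {ffun 'I_(arity f) -> A}),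
    (forall i, P (u i)) -> P (op A f u).

Definition in_Sg S (A : algebra S) (X : A -> Prop) (x : A) : Prop :=
  forall C : A -> Prop, (forall y, X y -> C y) -> closed C -> C x.

Definition in2 (T : Type) (a b x : T) : Prop := x = a \/ x = b.

Definition sg2 S (A : algebra S) (a b : A) : A -> Prop := in_Sg (in2 a b).

(* th is a congruence of the subalgebra P of A (only its values on P matter) *)
Definition cong_on S (A : algebra S) (P : A -> Prop) (th : A -> A -> Prop) :=
  [/\ forall x, P x -> th x x,
      forall x y, P x -> P y -> th x y -> th y x,
      forall x y z, P x -> P y -> P z -> th x y -> th y z -> th x z &
      forall (f : sym S) (u v : {ffun 'I_(arity f) -> A}),
        (forall i, P (u i)) -> (forall i, P (v i)) ->
        (forall i, th (u i) (v i)) -> th (op A f u) (op A f v)].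

Definition proper_on S (A : algebra S) (P : A -> Prop) (th : A -> A -> Prop) :=
  exists x y, [/\ P x, P y & ~ th x y].

Definition maxcong_on S (A : algebra S) (P : A -> Prop) (th : A -> A -> Prop) :=
  [/\ cong_on P th, proper_on P th &
      forall th' : A -> A -> Prop, cong_on P th' -> proper_on P th' ->
        (forall x y, P x -> P y -> th x y -> th' x y) ->
        (forall x y, P x -> P y -> th' x y -> th x y)].

(* B/th is a set: every basic operation of B/th is a projection *)
Definition unary_opt S (A : algebra S) (a b : A) (th : A -> A -> Prop) :=
  forall f : sym S, exists i : 'I_(arity f),
    forall u : {ffun 'I_(arity f) -> A}, (forall j, sg2 a b (u j)) ->
      th (op A f u) (u i).

Definition semilattice_on S (A : algebra S) (th : A -> A -> Prop)
    (g : A -> A -> A) (a b : A) :=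
  forall x y z, in2 a b x -> in2 a b y -> in2 a b z ->
    [/\ th (g x y) a \/ th (g x y) b, th (g x x) x, th (g x y) (g y x) &
        th (g (g x y) z) (g x (g y z))].

Definition majority_on S (A : algebra S) (th : A -> A -> Prop)
    (m : A -> A -> A -> A) (a b : A) :=
  forall x y, in2 a b x -> in2 a b y ->
    [/\ th (m x x y) x, th (m x y x) x & th (m y x x) x].

(* P/th is term equivalent, via the bijection induced by phi : P/th -> M,
   to the full idempotent reduct of the R-module M: its n-ary term operations
   are exactly the maps x |-> sum_i r_i x_i with sum_i r_i = 1. *)
Definition module_equiv S (A : algebra S) (P : A -> Prop) (th : A -> A -> Prop)
    (R : nzRingType) (M : lmodType R) (phi : A -> M) :=
  [/\ forall x y, P x -> P y -> (phi x = phi y <-> th x y),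
      forall m : M, exists x, P x /\ phi x = m,
      forall (n : nat) (t : term S), vars_lt n t ->
        exists r : 'I_n -> R, (\sum_(i < n) r i = 1)%R /\
          forall e : nat -> A, (forall i, P (e i)) ->
            phi (eval A e t) = (\sum_(i < n) r i *: phi (e i))%R &
      forall (n : nat) (r : 'I_n -> R), (\sum_(i < n) r i = 1)%R ->
        exists t : term S, vars_lt n t /\
          forall e : nat -> A, (forall i, P (e i)) ->
            phi (eval A e t) = (\sum_(i < n) r i *: phi (e i))%R].

Definition affine_opt S (A : algebra S) (a b : A) (th : A -> A -> Prop) :=
  exists (R : nzRingType) (M : lmodType R) (phi : A -> M),
    module_equiv (sg2 a b) th phi /\
    exists t : term S, forall x y z, sg2 a b x -> sg2 a b y -> sg2 a b z ->
      phi (ter A t x y z) = (phi x - phi y + phi z)%R.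

Definition un_wit S (A : algebra S) (a b : A) th :=
  maxcong_on (sg2 a b) th /\ unary_opt a b th.
Definition sl_wit S (A : algebra S) (a b : A) th :=
  maxcong_on (sg2 a b) th /\ exists t : term S, semilattice_on th (bin A t) a b.
Definition mj_wit S (A : algebra S) (a b : A) th :=
  maxcong_on (sg2 a b) th /\ exists t : term S, majority_on th (ter A t) a b.
Definition af_wit S (A : algebra S) (a b : A) th :=
  maxcong_on (sg2 a b) th /\ affine_opt a b th.

Definition un_type S (A : algebra S) (a b : A) := exists th, un_wit a b th.
Definition sl_type S (A : algebra S) (a b : A) := exists th, sl_wit a b th.
Definition mj_type S (A : algebra S) (a b : A) :=
  ~ sl_type a b /\ exists th, mj_wit a b th.

Definition smooth S (A : algebra S) :=
  forall (a b : A) (th : A -> A -> Prop),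
    sl_wit a b th \/ (mj_type a b /\ mj_wit a b th) ->
    closed (fun x => sg2 a b x /\ (th x a \/ th x b)).

Definition std_class S (K : algebra S -> Prop) :=
  [/\
      exists (n : nat) (F : 'I_n -> algebra S),
        forall A, K A -> exists i, iso A (F i),
      forall A, K A -> idempotent A /\ smooth A,
      forall (A B : algebra S) (h : B -> A), K A -> alg_hom h -> injective h -> K B,
      forall (A B : algebra S) (h : A -> B), K A -> alg_hom h ->
        (forall y, exists x, h x = y) -> K B &
      forall A, K A -> forall a b : A, ~ un_type a b].

Definition thin_sl S (A : algebra S) (dot : term S) (a b : A) :=
  bin A dot a b = b /\ bin A dot b a = b.

Definition dot_cond S (K : algebra S -> Prop) (dot : term S) :=
  (forall A, K A -> forall (a b : A) th, sl_wit a b th ->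
      semilattice_on th (bin A dot) a b) /\
  (forall A, K A -> forall a b : A,
      bin A dot a b = a \/ thin_sl dot a (bin A dot a b)).

Definition majority_cond S (K : algebra S -> Prop) (g : term S) :=
  forall A, K A ->
    (forall x y : A, ter A g x (ter A g x y y) (ter A g x y y) = ter A g x y y) /\
    (forall (a b : A) th, mj_type a b -> mj_wit a b th ->
        majority_on th (ter A g) a b).

Definition induces_affine S (A : algebra S) (h : term S) (a b : A) th :=
  forall (R : nzRingType) (M : lmodType R) (phi : A -> M),
    module_equiv (sg2 a b) th phi ->
    forall x y z, sg2 a b x -> sg2 a b y -> sg2 a b z ->
      phi (ter A h x y z) = (phi x - phi y + phi z)%R.

Definition minority_cond S (K : algebra S -> Prop) (h : term S) :=
  forall A, K A ->
    (forall x y : A, ter A h (ter A h x y y) y y = ter A h x y y) /\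
    (forall (a b : A) th, af_wit a b th -> induces_affine h a b th).

Definition thin_mj S (K : algebra S -> Prop) (A : algebra S) (a b : A) :=
  forall g : term S, majority_cond K g ->
    [/\ in_Sg (in2 a (ter A g a b b)) b,
        in_Sg (in2 a (ter A g b a b)) b &
        in_Sg (in2 a (ter A g b b a)) b].

Definition thin_af S (K : algebra S -> Prop) (h : term S) (A : algebra S) (a b : A) :=
  ter A h b a a = b /\
  forall h' : term S, minority_cond K h' -> in_Sg (in2 a (ter A h' a a b)) b.

Inductive kind := Ks | Kas | Kasm.

Definition thin_edge S (K : algebra S -> Prop) (dot h : term S) (k : kind)
    (A : algebra S) (a b : A) : Prop :=
  match k with
  | Ks => thin_sl dot a b
  | Kas => thin_sl dot a b \/ thin_af K h a b
  | Kasm => [\/ thin_sl dot a b, thin_mj K a b | thin_af K h a b]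
  end.

Arguments thin_edge {S} K dot h k A a b.

Inductive reach (T : Type) (R : T -> T -> Prop) : T -> T -> Prop :=
| reach0 x : reach R x x
| reachS x y z : R x y -> reach R y z -> reach R x z.

(* Ks: maximal; Kas: as-maximal; Kasm: u-maximal *)
Definition maximal S (K : algebra S -> Prop) (dot h : term S) (k : kind)
    (A : algebra S) (a : A) :=
  forall b : A, reach (thin_edge K dot h k A) a b ->
                reach (thin_edge K dot h k A) b a.
Arguments maximal {S} K dot h k A a.

From Pilot Require Import Defs.
From mathcomp Require Import all_boot all_algebra.
From Stdlib Require Import Classical ClassicalDescription.
Set Implicit Arguments. Unset Strict Implicit.

(* Let pi : A -> Q be a surjective homomorphism.  Every thin edge of A
   projects to a thin edge of Q (terms commute with homomorphisms), so paths
   project.  Conversely every thin edge of Q starting at pi a lifts to a path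
   of A starting at a: semilattice edges lift through a.b, while majority and
   affine edges lift to an edge a -> b where b is chosen in its theta-class so
   that Sg(a,b) is inclusion-minimal; minimality turns the "b is generated"
   conditions in Q into the same conditions in A.  Hence paths lift too.
   Both lifting steps rest on one finiteness fact: in a finite preorder every
   element lies below a terminal one (an element below everything above it).
   (2) then says a path out of pi a lifts, and its image comes back; for (1)
   we climb from a preimage of abar to a terminal b, project, return to abar
   in Q, and lift that return path from b. *)

(* Decide a proposition classically, to count elements satisfying it. *)
Definition holds (P : Prop) : bool :=
  if excluded_middle_informative P then true else false.

Lemma holdsP (P : Prop) : reflect P (holds P).
Proof. by rewrite /holds; case: excluded_middle_informative => H; constructor. Qed.

Lemma preorder_terminal (T : finType) (R : T -> T -> Prop) :
  (forall x, R x x) -> (forall x y z, R x y -> R y z -> R x z) ->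
  forall x, exists2 y, R x y & forall z, R y z -> R z y.
Proof.
move=> Rrefl Rtrans x0.
pose up (x : T) := [set z | holds (R x z)].
suff: forall n x, #|up x| < n -> exists2 y, R x y & forall z, R y z -> R z y.
  by apply; exact: ltnSn.
elim=> [//|n IH] x up_lt.
case: (classic (forall z, R x z -> R z x)) => [x_top|]; first by exists x.
move=> /not_all_ex_not [z z_not_below].
have [Rxz not_Rzx] := imply_to_and _ _ z_not_below.
have up_z_lt : #|up z| < n.
  rewrite -ltnS (leq_trans _ up_lt) // ltnS; apply: proper_card; apply/properP.
  split; first by apply/subsetP=> w; rewrite !inE => /holdsP Rzw;
                  apply/holdsP; exact: Rtrans Rxz Rzw.
  by exists x; rewrite !inE; [apply/holdsP | apply/negP => /holdsP].
have [y Rzy y_top] := IH z up_z_lt.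
by exists y => //; exact: Rtrans Rxz Rzy.
Qed.

Lemma reach1 (T : Type) (R : T -> T -> Prop) x y : R x y -> reach R x y.
Proof. by move=> Rxy; apply: reachS Rxy (reach0 _ _). Qed.

Lemma reach_trans (T : Type) (R : T -> T -> Prop) x y z :
  reach R x y -> reach R y z -> reach R x z.
Proof. by elim=> // x' y' z' Rxy _ IH /IH; apply: reachS Rxy. Qed.

Lemma reach_map (T U : Type) (R : T -> T -> Prop) (R' : U -> U -> Prop)
    (f : T -> U) :
  (forall x y, R x y -> R' (f x) (f y)) ->
  forall x y, reach R x y -> reach R' (f x) (f y).
Proof.
move=> Rf x y; elim=> [z|x' y' z' Rxy _ IH]; first exact: reach0.
exact: reachS (Rf _ _ Rxy) IH.
Qed.

Section Subalgebras.
Variables (S : signature) (A : algebra S).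

Lemma eval_closed (C : A -> Prop) : Defs.closed C ->
  forall (t : term S) (e : nat -> A), (forall i, C (e i)) -> C (eval A e t).
Proof.
move=> C_closed; fix IH 1 => - [i|f args] e Ce /=; first exact: Ce.
by apply: C_closed => j; rewrite ffunE; apply: IH.
Qed.

Lemma Sg_closed (X : A -> Prop) : Defs.closed (in_Sg X).
Proof. by move=> f u Su C XC C_closed; apply: (C_closed) => i; exact: Su. Qed.

Lemma Sg_gen (X : A -> Prop) x : X x -> in_Sg X x.
Proof. by move=> Xx C XC _; apply: XC. Qed.

Lemma Sg_l (a b : A) : in_Sg (in2 a b) a.
Proof. by apply: Sg_gen; left. Qed.

Lemma Sg_r (a b : A) : in_Sg (in2 a b) b.
Proof. by apply: Sg_gen; right. Qed.

Lemma Sg_least (X Y : A -> Prop) :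
  (forall x, X x -> in_Sg Y x) -> forall x, in_Sg X x -> in_Sg Y x.
Proof. by move=> XY x SXx; apply: SXx XY (@Sg_closed Y). Qed.

Lemma Sg_pair_sub (a c x : A) :
  in_Sg (in2 a c) x -> forall y, in_Sg (in2 a x) y -> in_Sg (in2 a c) y.
Proof. by move=> Sx; apply: Sg_least => y [->|->] //; apply: Sg_l. Qed.

Lemma ter_Sg t (a b x y z : A) :
  in_Sg (in2 a b) x -> in_Sg (in2 a b) y -> in_Sg (in2 a b) z ->
  in_Sg (in2 a b) (ter A t x y z).
Proof. by move=> Sx Sy Sz; apply: eval_closed (@Sg_closed _) _ _ _; case=> [|[]]. Qed.

End Subalgebras.
Arguments Sg_l {S A} a b.
Arguments Sg_r {S A} a b.

Section Homomorphisms.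
Variables (S : signature) (A Q : algebra S) (pi : A -> Q).
Hypothesis pi_hom : alg_hom pi.

Lemma eval_hom (t : term S) (e : nat -> A) (e' : nat -> Q) :
  (forall i, pi (e i) = e' i) -> pi (eval A e t) = eval Q e' t.
Proof.
elim: t e e' => [i|f args IH] e e' ee' /=; first exact: ee'.
rewrite pi_hom; congr (op Q f _); apply/ffunP => j; rewrite !ffunE.
exact: IH.
Qed.

Lemma bin_hom t x y : pi (bin A t x y) = bin Q t (pi x) (pi y).
Proof. by apply: eval_hom; case. Qed.

Lemma ter_hom t x y z : pi (ter A t x y z) = ter Q t (pi x) (pi y) (pi z).
Proof. by apply: eval_hom; case=> [|[]]. Qed.

Lemma Sg_image (a c x : A) :
  in_Sg (in2 a c) x -> in_Sg (in2 (pi a) (pi c)) (pi x).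
Proof.
move=> Sx; apply: (Sx (fun x => in_Sg (in2 (pi a) (pi c)) (pi x))).
  by move=> y [->|->]; [apply: Sg_l | apply: Sg_r].
move=> f u Su; rewrite pi_hom; apply: Sg_closed => i; rewrite ffunE; exact: Su.
Qed.

Lemma Sg_preimage (a c : A) y :
  in_Sg (in2 (pi a) (pi c)) y -> exists2 x, in_Sg (in2 a c) x & pi x = y.
Proof.
move=> Sy; apply: (Sy (fun y => exists2 x, in_Sg (in2 a c) x & pi x = y)).
  by move=> z [->|->]; [exists a; first apply: Sg_l | exists c; first apply: Sg_r].
move=> f u /fin_all_exists2 [v Sv piv].
exists (op A f [ffun i => v i]); first by apply: Sg_closed => i; rewrite ffunE.
by rewrite pi_hom; congr (op Q f _); apply/ffunP => i; rewrite !ffunE.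
Qed.

Definition sg_minimal (a b : A) :=
  forall c, pi c = pi b ->
    (forall x, in_Sg (in2 a c) x -> in_Sg (in2 a b) x) -> in_Sg (in2 a c) b.

Lemma sg_minimal_exists (a b0 : A) : exists2 b, pi b = pi b0 & sg_minimal a b.
Proof.
pose below (b c : A) :=
  pi c = pi b /\ forall x, in_Sg (in2 a c) x -> in_Sg (in2 a b) x.
have [b [b_b0 _] b_min] : exists2 b, below b0 b & forall c, below b c -> below c b.
  apply: preorder_terminal => [b | b c d [cb Sc] [dc Sd]]; first by split.
  by split=> [|x /Sd /Sc]; first rewrite dc.
exists b => // c cb Sc.
by have [_ ] := b_min c (conj cb Sc); apply; apply: Sg_r.
Qed.

Lemma sg_minimal_gen (a b c : A) : sg_minimal a b ->
  in_Sg (in2 a b) c -> in_Sg (in2 (pi a) (pi c)) (pi b) -> in_Sg (in2 a c) b.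
Proof.
move=> b_min Sc /Sg_preimage [x Sx pix].
have Sb : in_Sg (in2 a x) b.
  by apply: b_min pix _ => y /(Sg_pair_sub Sx) /(Sg_pair_sub Sc).
exact: Sg_pair_sub Sx _ Sb.
Qed.

Lemma sg_minimal_sub (a b b' : A) : sg_minimal a b ->
  in_Sg (in2 a b) b' -> pi b' = pi b -> sg_minimal a b'.
Proof.
move=> b_min Sb' pib' c cb' Sc.
have Sb : in_Sg (in2 a c) b.
  by apply: b_min; [rewrite cb' | move=> x /Sc /(Sg_pair_sub Sb')].
exact: Sg_pair_sub Sb _ Sb'.
Qed.

End Homomorphisms.

Section ThinEdges.
Variables (S : signature) (K : algebra S -> Prop) (dot h : term S).
Variables (A Q : algebra S) (pi : A -> Q).
Hypothesis pi_hom : alg_hom pi.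

(* Each kind of thin edge is preserved by homomorphisms, since term
   operations and generated subalgebras commute with pi. *)
Lemma thin_sl_image (a b : A) :
  thin_sl dot a b -> thin_sl dot (pi a) (pi b).
Proof. by case=> ab ba; split; rewrite -(bin_hom pi_hom) ?ab ?ba. Qed.

Lemma thin_mj_image (a b : A) :
  thin_mj K a b -> thin_mj K (pi a) (pi b).
Proof.
move=> ab g g_maj; have [S1 S2 S3] := ab g g_maj.
by split; rewrite -(ter_hom pi_hom); apply: (Sg_image pi_hom).
Qed.

Lemma thin_af_image (a b : A) :
  thin_af K h a b -> thin_af K h (pi a) (pi b).
Proof.
case=> baa Sb; split; first by rewrite -(ter_hom pi_hom) baa.
by move=> h' h'_min; rewrite -(ter_hom pi_hom); apply: (Sg_image pi_hom); apply: Sb.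
Qed.

Lemma thin_edge_image k (a b : A) :
  thin_edge K dot h k A a b -> thin_edge K dot h k Q (pi a) (pi b).
Proof.
case: k => /= [|[]|[]] ab.
- exact: thin_sl_image.
- by left; apply: thin_sl_image.
- by right; apply: thin_af_image.
- by apply: Or31; apply: thin_sl_image.
- by apply: Or32; apply: thin_mj_image.
- by apply: Or33; apply: thin_af_image.
Qed.

Lemma path_image k (a b : A) : reach (thin_edge K dot h k A) a b ->
  reach (thin_edge K dot h k Q) (pi a) (pi b).
Proof. by apply: reach_map => x y; apply: thin_edge_image. Qed.

Hypothesis pi_onto : forall q : Q, exists a : A, pi a = q.

(* Semilattice edges lift through a.b: either a.b = a, or a (a.b) is thin. *)
Hypothesis dot_thin : forall a b : A, bin A dot a b = a \/ thin_sl dot a (bin A dot a b).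

Lemma thin_sl_lift k (a : A) y : thin_sl dot (pi a) y ->
  exists2 b, pi b = y & reach (thin_edge K dot h k A) a b.
Proof.
case=> ay _.
have [b0 pib0] := pi_onto y; subst y.
have pi_ab : pi (bin A dot a b0) = pi b0 by rewrite (bin_hom pi_hom) ay.
case: (dot_thin a b0) => [aa | ab].
  by exists a; [rewrite -pi_ab aa | apply: reach0].
by exists (bin A dot a b0) => //; apply: reach1; case: k => /=; by [| left | apply: Or31].
Qed.

(* Majority edges lift to an Sg-minimal element of the target class. *)
Lemma thin_mj_lift (a : A) y : thin_mj K (pi a) y ->
  exists2 b, pi b = y & thin_mj K a b.
Proof.
move=> ay; have [b0 pib0] := pi_onto y; subst y.
have [b pib b_min] := sg_minimal_exists pi a b0.
rewrite -pib in ay *; exists b => // g g_maj; have [S1 S2 S3] := ay g g_maj.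
have Sa := Sg_l a b; have Sb := Sg_r a b.
by split; apply: (sg_minimal_gen pi_hom b_min);
  rewrite ?(ter_hom pi_hom) //; apply: ter_Sg.
Qed.

(* Affine edges lift to h(b,a,a) for an Sg-minimal b; h(h(x,y,y),y,y) =
   h(x,y,y) makes h(b,a,a) satisfy the first condition of a thin affine edge. *)
Hypothesis h_idem : forall x y : A, ter A h (ter A h x y y) y y = ter A h x y y.

Lemma thin_af_lift (a : A) y : thin_af K h (pi a) y ->
  exists2 b, pi b = y & thin_af K h a b.
Proof.
case=> baa Sy; have [b0 pib0] := pi_onto y; subst y.
have [b pib b_min] := sg_minimal_exists pi a b0.
rewrite -pib in baa Sy *.
have Sa := Sg_l a b; have Sb := Sg_r a b.
set b' := ter A h b a a.
have pi_b' : pi b' = pi b by rewrite (ter_hom pi_hom) baa.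
have b'_min : sg_minimal pi a b' by apply: sg_minimal_sub b_min _ pi_b'; apply: ter_Sg.
exists b' => //; split; first exact: h_idem.
move=> h' h'_min; apply: (sg_minimal_gen pi_hom b'_min).
  by apply: ter_Sg; [apply: Sg_l | apply: Sg_l | apply: Sg_r].
by rewrite (ter_hom pi_hom) pi_b'; apply: Sy.
Qed.

Lemma thin_edge_lift k (a : A) y : thin_edge K dot h k Q (pi a) y ->
  exists2 b, pi b = y & reach (thin_edge K dot h k A) a b.
Proof.
case: k => /= [|[]|[]] ay; try exact: thin_sl_lift.
- by have [b pib ab] := thin_af_lift ay; exists b => //; apply: reach1; right.
- by have [b pib ab] := thin_mj_lift ay; exists b => //; apply: reach1; apply: Or32.
- by have [b pib ab] := thin_af_lift ay; exists b => //; apply: reach1; apply: Or33.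
Qed.

Lemma path_lift k (x y : Q) : reach (thin_edge K dot h k Q) x y ->
  forall a, pi a = x -> exists2 b, pi b = y & reach (thin_edge K dot h k A) a b.
Proof.
elim=> [x' a <- | x' y' z' xy _ IH a pia]; first by exists a; last apply: reach0.
rewrite -pia in xy; have [b1 pib1 ab1] := thin_edge_lift xy.
have [b pib b1b] := IH b1 pib1.
by exists b; last apply: reach_trans ab1 b1b.
Qed.

End ThinEdges.

Theorem corollary15 (S : signature) (K : algebra S -> Prop) (dot h : term S)
  (HK : std_class K) (Hdot : dot_cond K dot) (Hh : minority_cond K h)
  (A : algebra S) (HA : K A)
  (theta : A -> A -> Prop) (Htheta : cong_on (fun _ => True) theta)
  (Q : algebra S) (pi : A -> Q) (Hpi : alg_hom pi)
  (Hsurj : forall q : Q, exists a : A, pi a = q)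
  (Hker : forall x y : A, pi x = pi y <-> theta x y) :
  forall k : kind,
    (forall abar : Q, maximal K dot h k Q abar ->
       exists a : A, pi a = abar /\ maximal K dot h k A a) /\
    (forall a : A, maximal K dot h k A a -> maximal K dot h k Q (pi a)).
Proof.
move=> k.
have lift := path_lift Hpi Hsurj (Hdot.2 A HA) (Hh A HA).1.
split=> [abar abar_max | a a_max y ay].
- have [a0 pia0] := Hsurj abar; subst abar.
  have [b a0b b_top] :=
    @preorder_terminal A (reach (thin_edge K dot h k A)) (@reach0 _ _)
      (@reach_trans _ _) a0.
  have [c pic bc] := lift K k _ _ (abar_max _ (path_image Hpi a0b)) b erefl.
  exists c; split=> // z cz.
  exact: reach_trans (b_top _ (reach_trans bc cz)) bc.
- have [b pib ab] := lift K k _ _ ay a erefl.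
  by rewrite -pib; apply: path_image (a_max _ ab).
Qed.
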